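(* Let $G$ be a finite, simple, undirected, connected graph with at least two vertices and let $v \in V(G)$. The following statements are equivalent: (i) $v$ is the $\mathcal{L}$-root leaf of some DFS ordering of $G$ starting in $v$; (ii) $v$ is the $\mathcal{L}$-root leaf of every DFS ordering of $G$ starting in $v$; (iii) $v$ is the $\mathcal{L}$-root leaf of some MCS ordering of $G$; (iv) $v$ is the $\mathcal{L}$-root leaf of some GS ordering of $G$; (v) $v$ is an $\mathcal{L}$-branch leaf of some GS ordering of $G$; (vi) $v$ is an $\mathcal{F}$-branch leaf of some GS ordering of $G$; (vii) $v$ is the end-vertex (last vertex) of some GS ordering of $G$; (viii) $v$ is not a cut vertex of $G$.
   Context: A vertex ordering of $G$ is a bijection $\sigma:\{1,\dots,n\}\to V(G)$; $u \prec_\sigma w$ means $u$ comes before $w$. Searches are defined by the following label search: initially every vertex has label $\emptyset$; for $i=1,\dots,n$, choose any unnumbered vertex $x$ such that there is no unnumbered $y$ with $\mathrm{label}(x) \prec_{\mathcal{A}} \mathrm{label}(y)$, set $\sigma(i)=x$, and add $i$ to the labels of all unnumbered neighbors of $x$. The orderings produced this way are the $\mathcal{A}$-orderings. Generic Search (GS): $A \prec B$ iff $A=\emptyset$ and $B\neq\emptyset$. Depth First Search (DFS): $A \prec B$ iff ($A=\emptyset$ and $B\neq\emptyset$) or $\max(A)<\max(B)$. Maximum Cardinality Search (MCS): $A \prec B$ iff $|A|<|B|$. For a GS ordering $\sigma$ of a connected graph $G$, the $\mathcal{F}$-tree of $\sigma$ is the spanning tree containing, for each vertex $v\neq\sigma(1)$,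 the edge from $v$ to its leftmost neighbor in $\sigma$; the $\mathcal{L}$-tree of $\sigma$ contains, for each $v \neq \sigma(1)$, the edge from $v$ to its rightmost neighbor $w$ with $w \prec_\sigma v$. A vertex is an $\mathcal{F}$-leaf ($\mathcal{L}$-leaf) of $\sigma$ if it is a leaf of the $\mathcal{F}$-tree ($\mathcal{L}$-tree) of $\sigma$; it is the $\mathcal{F}$-root leaf ($\mathcal{L}$-root leaf) if additionally it is $\sigma(1)$, and an $\mathcal{F}$-branch leaf ($\mathcal{L}$-branch leaf) otherwise. *)

From mathcomp Require Import all_boot.
Set Implicit Arguments. Unset Strict Implicit. Unset Printing Implicit Defensive.

Definition simple_graph (T : finType) (e : rel T) : Prop :=
  symmetric e /\ irreflexive e.

Definition connected_graph (T : finType) (e : rel T) : Prop :=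
  forall x y : T, connect e x y.

Definition cut_vertex (T : finType) (e : rel T) (v : T) : Prop :=
  exists x y : T, [/\ x != v, y != v &
    ~~ connect (fun a b => [&& e a b, a != v & b != v]) x y].

(* A vertex ordering sigma is a sequence s with sigma(i) = nth _ s (i-1)
   listing every vertex exactly once. *)
Definition vertex_ordering (T : finType) (s : seq T) : Prop :=
  perm_eq s (enum T).

(* label of vertex x just before the vertex at (0-based) position k is
   chosen: the set of (1-based) numbers j <= k with sigma(j) adjacent to x,
   represented as an increasing list. *)
Definition label (T : finType) (e : rel T) (s : seq T) (k : nat) (x : T)
  : seq nat := [seq j <- iota 1 k | e (nth x s j.-1) x].

Definition GS_prec (A B : seq nat) : bool := (A == [::]) && (B != [::]).
Definition DFS_prec (A B : seq nat) : bool :=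
  ((A == [::]) && (B != [::])) || (\max_(j <- A) j < \max_(j <- B) j).
Definition MCS_prec (A B : seq nat) : bool := size A < size B.

Definition label_search_ordering (T : finType) (e : rel T)
    (prec : seq nat -> seq nat -> bool) (s : seq T) : Prop :=
  vertex_ordering s /\
  forall (k : nat) (y : T), k < size s -> y \notin take k s ->
    ~~ prec (label e s k (nth y s k)) (label e s k y).

Definition GS_ordering T e s := @label_search_ordering T e GS_prec s.
Definition DFS_ordering T e s := @label_search_ordering T e DFS_prec s.
Definition MCS_ordering T e s := @label_search_ordering T e MCS_prec s.

Definition F_parent (T : finType) (e : rel T) (s : seq T) (v w : T) : bool :=
  e v w && [forall w' : T, e v w' ==> (index w s <= index w' s)].

Definition L_parent (T : finType) (e : rel T) (s : seq T) (v w : T) : bool :=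
  [&& e v w, index w s < index v s &
   [forall w' : T, (e v w' && (index w' s < index v s)) ==>
                   (index w' s <= index w s)]].

Definition tree_edge (T : finType) (s : seq T) (par : T -> T -> bool)
  (u w : T) : bool :=
  ((index u s != 0) && par u w) || ((index w s != 0) && par w u).

Definition tree_leaf (T : finType) (s : seq T) (par : T -> T -> bool) (u : T)
  : bool := #|[set w | tree_edge s par u w]| == 1.

Definition F_leaf T e s u := @tree_leaf T s (F_parent e s) u.
Definition L_leaf T e s u := @tree_leaf T s (L_parent e s) u.

Definition F_root_leaf T e s u := @F_leaf T e s u && (index u s == 0).
Definition F_branch_leaf T e s u := @F_leaf T e s u && (index u s != 0).
Definition L_root_leaf T e s u := @L_leaf T e s u && (index u s == 0).
Definition L_branch_leaf T e s u := @L_leaf T e s u && (index u s != 0).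

From mathcomp Require Import all_boot zify.
Set Implicit Arguments. Unset Strict Implicit. Unset Printing Implicit Defensive.

(* If v is a cut vertex, then in a GS ordering the earliest vertex w that
   comes after v and lies outside the component of G - v containing the
   vertices numbered before v has v as its only earlier neighbour.  Hence w is
   a child of v in both the F-tree and the L-tree, v is not last, and v has
   degree at least two in both trees: its second neighbour is its own parent,
   or sigma(2) when v = sigma(1).
   Conversely, if G - v is connected, a generic search that postpones v as
   long as possible ends in v, and the last vertex of a GS ordering is a branch
   leaf of both trees.  A search from v that never passes over a vertex whose
   label is at least as large and has a larger maximum (DFS, and MCS with ties
   broken that way) numbers no vertex other than sigma(2) whose only earlier
   neighbour is v: at that moment connectivity of G - v provides an unnumbered
   vertex with a more recent numbered neighbour.  So sigma(2) is the only
   L-child of v. *)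

Section VertexOrdering.
Variables (T : finType) (s : seq T).
Hypothesis s_ord : vertex_ordering s.

Lemma ordering_uniq : uniq s.
Proof. by rewrite (perm_uniq s_ord) enum_uniq. Qed.

Lemma mem_ordering x : x \in s.
Proof. by rewrite (perm_mem s_ord) mem_enum. Qed.

Lemma size_ordering : size s = #|T|.
Proof. by rewrite (perm_size s_ord) cardT. Qed.

Lemma index_ordering_lt x : index x s < size s.
Proof. by rewrite index_mem mem_ordering. Qed.

Lemma nth_index_ordering x0 x : nth x0 s (index x s) = x.
Proof. by rewrite nth_index ?mem_ordering. Qed.

Lemma index_nth_ordering x0 k : k < size s -> index (nth x0 s k) s = k.
Proof. by move=> lt_ks; rewrite index_uniq ?ordering_uniq. Qed.

Lemma index_ordering_inj : injective (index^~ s).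
Proof. by move=> x y; apply: (index_inj x); apply: mem_ordering. Qed.

Lemma mem_take_ordering k x : (x \in take k s) = (index x s < k).
Proof. by rewrite in_take ?mem_ordering. Qed.

End VertexOrdering.

Lemma uniq_full_ordering (T : finType) (s : seq T) :
  uniq s -> #|T| <= size s -> vertex_ordering s.
Proof.
move=> s_uniq le_Ts; apply: uniq_perm; rewrite ?enum_uniq //.
have s_enum : {subset s <= enum T} by move=> x; rewrite mem_enum.
have le_Ts' : size (enum T) <= size s by rewrite -cardT.
by have [_] := uniq_min_size s_uniq s_enum le_Ts'.
Qed.

Section GreedyOrdering.
Variables (T : finType) (key : seq T -> T -> nat).

Lemma greedy_extension p : uniq p -> exists s,
  [/\ vertex_ordering s, take (size p) s = p &
   forall k y, size p <= k < size s -> y \notin take k s ->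
     key (take k s) y <= key (take k s) (nth y s k)].
Proof.
have [n] := ubnP (#|T| - size p); elim: n p => // n IHn p lt_n p_uniq.
have [full_p | lt_pT] := leqP #|T| (size p).
  exists p; split; [exact: uniq_full_ordering | exact: take_size |].
  by move=> k y /andP[le_pk]; rewrite ltnNge le_pk.
have [x0 x0p] : exists x0, x0 \notin p.
  apply/existsP; apply: contraLR lt_pT => /existsPn all_p; rewrite -leqNgt.
  apply: leq_trans (card_size p); apply: subset_leq_card.
  by apply/subsetP => x _; rewrite -[x \in p]negbK all_p.
case: (@arg_maxnP T x0 (fun x => x \notin p) (key p) x0p) => x xp x_max.
have lt_xn : #|T| - size (rcons p x) < n by rewrite size_rcons; lia.
have px_uniq : uniq (rcons p x) by rewrite rcons_uniq xp.
have [s [s_ord take_s greedy_s]] := IHn _ lt_xn px_uniq.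
have take_p : take (size p) s = p.
  by rewrite -(take_takel _ (leqnSn _)) -(size_rcons p x) take_s -cats1 take_size_cat.
exists s; split=> // k y /andP[le_pk lt_ks]; have [eq_kp | lt_pk] := eqVneq k (size p).
  rewrite eq_kp take_p -(nth_take _ (ltnSn _)) -(size_rcons p x) take_s nth_rcons ltnn eqxx.
  exact: x_max.
by apply: greedy_s; rewrite size_rcons; lia.
Qed.

End GreedyOrdering.

Lemma tree_leafP (T : finType) (s : seq T) (par : T -> T -> bool) u :
  reflect (exists a, forall w, tree_edge s par u w = (w == a)) (tree_leaf s par u).
Proof.
apply: (iffP cards1P) => [[a edges_a] | [a edges_a]]; exists a.
  by move=> w; rewrite -in_set1 -edges_a inE.
by apply/setP => w; rewrite inE in_set1.
Qed.

Lemma connect_exit (T : finType) (r : rel T) (A : pred T) a b :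
  connect r a b -> A a -> ~~ A b -> exists u w, [/\ A u, ~~ A w & r u w].
Proof.
case/connectP=> p; elim: p a => [|c p IHp] a /=; first by move=> _ -> ->.
case/andP=> r_ac path_c eq_b Aa nAb; have [Ac | nAc] := boolP (A c).
  exact: IHp path_c eq_b Ac nAb.
by exists a, c.
Qed.

Lemma lex_pair_leq a b c d N : c <= N -> d <= N ->
  b * N.+1 + d <= a * N.+1 + c -> b <= a /\ (a <= b -> d <= c).
Proof. by move=> le_cN le_dN le_ba; split; [|move=> le_ab]; nia. Qed.

Section Graph.
Variables (T : finType) (e : rel T).
Hypothesis e_sym : symmetric e.
Hypothesis e_conn : connected_graph e.

Lemma label_take s k x : k <= size s -> label e s k x = label e (take k s) k x.
Proof.
move=> le_ks; apply: eq_in_filter => j; rewrite mem_iota => /andP[j_gt0 lt_j].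
by rewrite nth_take //; lia.
Qed.

Lemma mem_label s k x u : vertex_ordering s ->
  ((index u s).+1 \in label e s k x) = (index u s < k) && e u x.
Proof.
move=> s_ord; rewrite mem_filter mem_iota /= nth_index_ordering // andbC.
by rewrite add1n ltnS.
Qed.

Lemma mem_label_inv s k x (j : nat) :
  vertex_ordering s -> k <= size s -> j \in label e s k x ->
  exists u, [/\ j = (index u s).+1, index u s < k & e u x].
Proof.
move=> s_ord le_ks; rewrite mem_filter mem_iota => /andP[jx /andP[j_gt0 lt_j]].
by exists (nth x s j.-1); rewrite index_nth_ordering //; [split=> //; lia | lia].
Qed.

Lemma label_bounds s k x (j : nat) : j \in label e s k x -> 0 < j <= k.
Proof. by rewrite mem_filter mem_iota => /andP[_]; lia. Qed.

Lemma label_max_le s k x : \max_(j <- label e s k x) j <= k.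
Proof. by apply/bigmax_leqP_seq => j /label_bounds /andP[]. Qed.

Lemma label_max_gt0 s k x : label e s k x != [::] -> 0 < \max_(j <- label e s k x) j.
Proof.
case def_l: (label e s k x) => [|j l] // _; rewrite -def_l.
have jl : j \in label e s k x by rewrite def_l mem_head.
by apply: leq_trans (leq_bigmax_seq _ jl isT); case/andP: (label_bounds jl).
Qed.

Lemma greedy_label_ordering (f : seq nat -> T -> nat) p : uniq p -> exists s,
  [/\ vertex_ordering s, take (size p) s = p &
   forall k y, size p <= k < size s -> y \notin take k s ->
     f (label e s k y) y <= f (label e s k (nth y s k)) (nth y s k)].
Proof.
move=> p_uniq.
have [s [s_ord take_p greedy_s]] :=
  greedy_extension (fun q x => f (label e q (size q) x) x) p_uniq.
exists s; split=> // k y k_range ys; have /andP[_ /ltnW le_ks] := k_range.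
by have := greedy_s k y k_range ys; rewrite size_takel // -!label_take.
Qed.

Lemma greedy_label_ordering_from (f : seq nat -> T -> nat) v : exists s,
  [/\ vertex_ordering s, index v s = 0 &
   forall k y, 0 < k < size s -> y \notin take k s ->
     f (label e s k y) y <= f (label e s k (nth y s k)) (nth y s k)].
Proof.
have [s [s_ord take_v greedy_s]] := greedy_label_ordering f (p := [:: v]) isT.
by exists s; split; rewrite // -(cat_take_drop 1 s) take_v /= eqxx.
Qed.

Definition avoid (v : T) : rel T := fun a b => [&& e a b, a != v & b != v].

Lemma avoid_sym v : symmetric (avoid v).
Proof. by move=> a b; rewrite /avoid e_sym [(a != v) && _]andbC. Qed.

Lemma not_cut_connect v a b :
  ~ cut_vertex e v -> a != v -> b != v -> connect (avoid v) a b.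
Proof. by move=> v_ncut av bv; apply/negPn/negP => ab; apply: v_ncut; exists a, b. Qed.

Definition only_earlier_neighbor (s : seq T) (w v : T) : Prop :=
  [/\ index v s < index w s, e w v &
      forall u, e w u -> index u s < index w s -> u = v].

Lemma only_earlier_index_gt0 s w v : only_earlier_neighbor s w v -> 0 < index w s.
Proof. by case=> lt_vw _ _; apply: leq_ltn_trans lt_vw. Qed.

Lemma only_earlier_neq s w v : only_earlier_neighbor s w v -> w != v.
Proof. by case=> lt_vw _ _; apply: contraTneq lt_vw => ->; rewrite ltnn. Qed.

Definition tree_parent (s : seq T) (par : T -> T -> bool) : Prop :=
  [/\ forall w, 0 < index w s -> exists p, par w p,
      forall w p, 0 < index w s -> par w p -> index p s < index w s,
      forall w p q, par w p -> par w q -> p = q &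
      forall w v, only_earlier_neighbor s w v -> par w v].

Section GenericSearch.
Variable s : seq T.
Hypothesis s_GS : GS_ordering e s.
Let s_ord : vertex_ordering s := s_GS.1.

Lemma GS_earlier_neighbor x : 0 < index x s ->
  exists2 u, e x u & index u s < index x s.
Proof.
move=> x_gt0; have lt_xs := index_ordering_lt s_ord x.
case def_lx: (label e s (index x s) x) => [|j lx]; last first.
  have : j \in label e s (index x s) x by rewrite def_lx mem_head.
  by case/(mem_label_inv s_ord (ltnW lt_xs)) => u [_ lt_ux ux]; exists u; rewrite // e_sym.
have first_x : index (nth x s 0) s < index x s.
  by rewrite index_nth_ordering // (leq_ltn_trans _ lt_xs).
have x_out : ~~ (index x s < index x s) by rewrite ltnn.
have [u [w [lt_ux ge_wx uw]]] :=
  connect_exit (A := fun z => index z s < index x s) (e_conn _ _) first_x x_out.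
have uw_label : (index u s).+1 \in label e s (index x s) w by rewrite mem_label // lt_ux.
have := s_GS.2 _ w lt_xs; rewrite mem_take_ordering // ge_wx => /(_ isT).
rewrite nth_index_ordering // def_lx /GS_prec eqxx /=.
by case: (label e s (index x s) w) uw_label.
Qed.

Lemma GS_prefix_connect v x : index x s < index v s -> connect (avoid v) (nth v s 0) x.
Proof.
have [n] := ubnP (index x s); elim: n x => // n IHn x; rewrite ltnS => le_xn lt_xv.
have [x0 | x_gt0] := posnP (index x s); first by rewrite -x0 nth_index_ordering.
have [u xu lt_ux] := GS_earlier_neighbor x_gt0.
apply: connect_trans (IHn u _ _) (connect1 _); [lia | lia |].
by rewrite /avoid e_sym xu /=; apply/andP; split; apply/eqP => eq_v; subst; lia.
Qed.

Lemma cut_vertex_orphan v a : cut_vertex e v -> a != v ->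
  (forall x, index x s < index v s -> connect (avoid v) a x) ->
  exists2 w, ~~ connect (avoid v) a w & only_earlier_neighbor s w v.
Proof.
move=> [x [y [xv yv nxy]]] av a_prefix.
have [z zv nz] : exists2 z, z != v & ~~ connect (avoid v) a z.
  have [ax | nax] := boolP (connect (avoid v) a x); last by exists x.
  exists y => //; apply: contra nxy; apply: connect_trans.
  by rewrite (sym_connect_sym (avoid_sym v)).
pose D := [pred z | (z != v) && ~~ connect (avoid v) a z].
have Dz : D z by rewrite /= zv.
case: (@arg_minnP T z D (index^~ s) Dz) => w /andP[wv nw] w_min.
have lt_vw : index v s < index w s.
  case: ltngtP => // [lt_wv | eq_vw]; first by rewrite a_prefix in nw.
  by rewrite (index_ordering_inj s_ord eq_vw) eqxx in wv.
have only_v u : e w u -> index u s < index w s -> u = v.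
  move=> wu lt_uw; apply/eqP; apply: contraT => uv.
  have [au | nau] := boolP (connect (avoid v) a u).
    have uw : avoid v u w by rewrite /avoid e_sym wu uv wv.
    by rewrite (connect_trans au (connect1 uw)) in nw.
  by have := w_min u; rewrite /= uv nau leqNgt lt_uw => /(_ isT).
have [u wu lt_uw] := GS_earlier_neighbor (leq_ltn_trans (leq0n _) lt_vw).
by exists w => //; split; rewrite // -(only_v u wu lt_uw).
Qed.

Lemma GS_cut_orphan v : 0 < index v s -> cut_vertex e v ->
  exists w, only_earlier_neighbor s w v.
Proof.
move=> v_gt0 v_cut; have first0 : index (nth v s 0) s = 0.
  by rewrite index_nth_ordering // (leq_ltn_trans _ (index_ordering_lt s_ord v)).
have first_v : nth v s 0 != v by apply: contraTneq v_gt0 => <-; rewrite first0.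
have [w _ w_only] := cut_vertex_orphan v_cut first_v (@GS_prefix_connect v).
by exists w.
Qed.

Lemma GS_second_only_earlier v : 1 < size s -> index v s = 0 ->
  only_earlier_neighbor s (nth v s 1) v.
Proof.
move=> s_gt1 v0; have a1 : index (nth v s 1) s = 1 by rewrite index_nth_ordering.
have only_v u : e (nth v s 1) u -> index u s < index (nth v s 1) s -> u = v.
  by move=> _; rewrite a1 ltnS leqn0 -v0 => /eqP/(index_ordering_inj s_ord).
have a_gt0 : 0 < index (nth v s 1) s by rewrite a1.
have [u au lt_ua] := GS_earlier_neighbor a_gt0.
split=> //; first by rewrite a1 v0.
by have uv := only_v u au lt_ua; rewrite uv in au.
Qed.

Lemma last_not_cut v : 1 < #|T| -> index v s = (size s).-1 -> ~ cut_vertex e v.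
Proof.
move=> T_gt1 v_last v_cut.
have v_gt0 : 0 < index v s by rewrite v_last (size_ordering s_ord); lia.
have [w [lt_vw _ _]] := GS_cut_orphan v_gt0 v_cut.
by have := index_ordering_lt s_ord w; lia.
Qed.

Lemma L_tree_parent : tree_parent s (L_parent e s).
Proof.
split.
- move=> w w_gt0; have [u wu lt_uw] := GS_earlier_neighbor w_gt0.
  have earlier_u : e w u && (index u s < index w s) by rewrite wu.
  case: (@arg_maxnP T u (fun z => e w z && (index z s < index w s)) (index^~ s)
          earlier_u) => p /andP[wp lt_pw] p_max.
  by exists p; rewrite /L_parent wp lt_pw; apply/forallP => z; apply/implyP/p_max.
- by move=> w p _ /and3P[].
- move=> w p q /and3P[wp lt_pw /forallP p_max] /and3P[wq lt_qw /forallP q_max].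
  apply: (index_ordering_inj s_ord); apply/eqP.
  by rewrite eqn_leq (implyP (q_max p)) ?wp ?lt_pw // (implyP (p_max q)) ?wq.
- move=> w v [lt_vw wv only_v]; rewrite /L_parent wv lt_vw.
  by apply/forallP => u; apply/implyP => /andP[wu /(only_v u wu)->].
Qed.

Lemma F_tree_parent : tree_parent s (F_parent e s).
Proof.
have F_parent_le w p u : F_parent e s w p -> e w u -> index p s <= index u s.
  by case/andP=> _ /forallP/(_ u)/implyP.
split.
- move=> w w_gt0; have [u wu _] := GS_earlier_neighbor w_gt0.
  case: (@arg_minnP T u (e w) (index^~ s) wu) => p wp p_min.
  by exists p; rewrite /F_parent wp; apply/forallP => z; apply/implyP/p_min.
- move=> w p w_gt0 wp; have [u wu lt_uw] := GS_earlier_neighbor w_gt0.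
  exact: leq_ltn_trans (F_parent_le _ _ _ wp wu) lt_uw.
- move=> w p q wp wq; have /andP[wp' _] := wp; have /andP[wq' _] := wq.
  apply: (index_ordering_inj s_ord); apply/eqP.
  by rewrite eqn_leq (F_parent_le _ _ _ wp wq') (F_parent_le _ _ _ wq wp').
- move=> w v [lt_vw wv only_v]; rewrite /F_parent wv; apply/forallP => u.
  apply/implyP => wu; have [lt_uw | ge_uw] := ltnP (index u s) (index w s).
    by rewrite (only_v u wu lt_uw).
  exact: leq_trans (ltnW lt_vw) ge_uw.
Qed.

Section SearchTree.
Variable par : T -> T -> bool.
Hypothesis s_par : tree_parent s par.

Lemma tree_edge_child v w : only_earlier_neighbor s w v -> tree_edge s par v w.
Proof.
case: s_par => _ _ _ par_only w_only.
move: (only_earlier_index_gt0 w_only); rewrite lt0n => w_ne0.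
by rewrite /tree_edge (par_only w v w_only) w_ne0 orbT.
Qed.

Lemma tree_root_leaf_not_cut v : 1 < #|T| -> index v s = 0 ->
  tree_leaf s par v -> ~ cut_vertex e v.
Proof.
move=> T_gt1 v0 /tree_leafP[c edge_c] v_cut.
have s_gt1 : 1 < size s by rewrite (size_ordering s_ord).
have a_only := GS_second_only_earlier s_gt1 v0.
have no_prefix x : index x s < index v s -> connect (avoid v) (nth v s 1) x.
  by rewrite v0.
have [w nw w_only] := cut_vertex_orphan v_cut (only_earlier_neq a_only) no_prefix.
move: nw; have := tree_edge_child w_only; have := tree_edge_child a_only.
by rewrite !edge_c => /eqP-> /eqP->; rewrite connect0.
Qed.

Lemma tree_branch_leaf_not_cut v : tree_leaf s par v -> index v s != 0 ->
  ~ cut_vertex e v.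
Proof.
move=> /tree_leafP[c edge_c]; rewrite -lt0n => v_gt0 v_cut.
have [par_ex par_lt _ _] := s_par; have [p vp] := par_ex v v_gt0.
have [w w_only] := GS_cut_orphan v_gt0 v_cut; have [lt_vw _ _] := w_only.
have /eqP eq_pc : p == c by rewrite -edge_c /tree_edge -lt0n v_gt0 vp.
have /eqP eq_wc : w == c by rewrite -edge_c tree_edge_child.
by have := par_lt v p v_gt0 vp; rewrite eq_pc -eq_wc; lia.
Qed.

Lemma tree_leaf_last v : 0 < index v s -> index v s = (size s).-1 ->
  tree_leaf s par v.
Proof.
move=> v_gt0 v_last; have [par_ex par_lt par_uniq _] := s_par.
have [p vp] := par_ex v v_gt0; apply/tree_leafP; exists p => w.
rewrite /tree_edge -lt0n v_gt0 /=; apply/idP/eqP => [|->]; last by rewrite vp.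
case/orP => [/(par_uniq v w p)/(_ vp) // | /andP[w_gt0 /(par_lt w v)]].
by rewrite lt0n => /(_ w_gt0); have := index_ordering_lt s_ord w; lia.
Qed.

End SearchTree.

Lemma last_branch_leaves v : 1 < #|T| -> index v s = (size s).-1 ->
  L_branch_leaf e s v && F_branch_leaf e s v.
Proof.
move=> T_gt1 v_last.
have v_gt0 : 0 < index v s by rewrite v_last (size_ordering s_ord); lia.
rewrite /L_branch_leaf /F_branch_leaf -lt0n v_gt0 !andbT.
apply/andP; split; first exact: (tree_leaf_last L_tree_parent).
exact: (tree_leaf_last F_tree_parent).
Qed.

Lemma L_root_leaf_not_cut v : 1 < #|T| -> L_root_leaf e s v -> ~ cut_vertex e v.
Proof.
move=> T_gt1 /andP[leaf /eqP v0].
exact: (tree_root_leaf_not_cut L_tree_parent T_gt1 v0 leaf).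
Qed.

Lemma L_branch_leaf_not_cut v : L_branch_leaf e s v -> ~ cut_vertex e v.
Proof. by case/andP=> leaf; exact: (tree_branch_leaf_not_cut L_tree_parent leaf). Qed.

Lemma F_branch_leaf_not_cut v : F_branch_leaf e s v -> ~ cut_vertex e v.
Proof. by case/andP=> leaf; exact: (tree_branch_leaf_not_cut F_tree_parent leaf). Qed.

Definition prefers_recent : Prop :=
  forall k y, k < size s -> y \notin take k s ->
    size (label e s k (nth y s k)) <= size (label e s k y) ->
    \max_(j <- label e s k y) j <= \max_(j <- label e s k (nth y s k)) j.

Lemma label_L_child_of_first v w : index v s = 0 -> L_parent e s w v ->
  forall j, j \in label e s (index w s) w -> j = 1.
Proof.
move=> v0 /and3P[_ _ /forallP v_max] j.
case/(mem_label_inv s_ord (ltnW (index_ordering_lt s_ord w))) => u [-> lt_uw uw].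
by have := v_max u; rewrite e_sym uw lt_uw v0 leqn0 => /eqP->.
Qed.

Lemma prefers_recent_L_root_leaf v : prefers_recent -> 1 < #|T| ->
  index v s = 0 -> ~ cut_vertex e v -> L_root_leaf e s v.
Proof.
move=> s_rec T_gt1 v0 v_ncut; rewrite /L_root_leaf v0 eqxx andbT.
have s_gt1 : 1 < size s by rewrite (size_ordering s_ord).
have a_only := GS_second_only_earlier s_gt1 v0.
have a1 : index (nth v s 1) s = 1 by rewrite index_nth_ordering.
have [_ _ _ L_only] := L_tree_parent.
apply/tree_leafP; exists (nth v s 1) => w; rewrite /tree_edge v0 /=.
apply/idP/eqP => [/andP[w_ne0 wv] | ->]; last by rewrite a1 L_only.
apply: (index_ordering_inj s_ord); apply/eqP; rewrite a1 eqn_leq lt0n w_ne0 andbT.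
rewrite leqNgt; apply/negP => w_gt1.
have w_lab := label_L_child_of_first v0 wv.
have size_w : size (label e s (index w s) w) <= size [:: 1].
  by apply: uniq_leq_size => [|j /w_lab->]; rewrite ?filter_uniq ?iota_uniq ?mem_head.
have max_w : \max_(j <- label e s (index w s) w) j <= 1.
  by apply/bigmax_leqP_seq => j /w_lab->.
have w_neq_v : w != v by apply: contraTneq w_ne0 => ->; rewrite v0.
have a_far : ~~ (index w s <= index (nth v s 1) s) by rewrite a1 -ltnNge.
have [z [z' [ge_zw lt_z'w /and3P[zz' _ z'v]]]] :=
  connect_exit (A := fun x => index w s <= index x s)
    (not_cut_connect v_ncut w_neq_v (only_earlier_neq a_only)) (leqnn _) a_far.
have z'_gt0 : 0 < index z' s.
  by rewrite lt0n -v0; apply: contra z'v => /eqP/(index_ordering_inj s_ord)->.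
have z_lab : (index z' s).+1 \in label e s (index w s) z.
  by rewrite mem_label // ltnNge lt_z'w e_sym.
have size_z : 0 < size (label e s (index w s) z) by case: (label _ _ _ _) z_lab.
have max_z : (index z' s).+1 <= \max_(j <- label e s (index w s) z) j.
  exact: leq_bigmax_seq z_lab isT.
have := s_rec _ z (index_ordering_lt s_ord w).
rewrite mem_take_ordering // -leqNgt ge_zw nth_index_ordering //.
by move=> /(_ isT (leq_trans size_w size_z)); lia.
Qed.

End GenericSearch.

Lemma DFS_GS s : DFS_ordering e s -> GS_ordering e s.
Proof.
case=> s_ord s_DFS; split=> // k y lt_ks ys; apply: contra (s_DFS k y lt_ks ys).
by rewrite /DFS_prec /GS_prec => ->.
Qed.

Lemma MCS_GS s : MCS_ordering e s -> GS_ordering e s.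
Proof.
case=> s_ord s_MCS; split=> // k y lt_ks ys; apply: contra (s_MCS k y lt_ks ys).
by case/andP=> /eqP->; case: (label e s k y).
Qed.

Lemma DFS_prefers_recent s : DFS_ordering e s -> prefers_recent s.
Proof.
case=> _ s_DFS k y lt_ks ys _; have := s_DFS k y lt_ks ys.
by rewrite /DFS_prec => /norP[_]; rewrite -leqNgt.
Qed.

Lemma DFS_ordering_from v : exists s, DFS_ordering e s /\ index v s = 0.
Proof.
have [s [s_ord v0 s_max]] := greedy_label_ordering_from (fun A _ => \max_(j <- A) j) v.
exists s; split=> //; split=> // [[|k]] y lt_ks ys; first by rewrite /DFS_prec big_nil.
have le_max := s_max k.+1 y lt_ks ys; apply/norP; split; last by rewrite -leqNgt.
apply: contraL le_max => /andP[/eqP-> y_ne]; rewrite big_nil -ltnNge.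
exact: label_max_gt0.
Qed.

Lemma MCS_ordering_from v :
  exists s, [/\ MCS_ordering e s, prefers_recent s & index v s = 0].
Proof.
(* Lexicographic comparison of (size A, max A), encoded in one number since
   max A < #|T|.+1. *)
pose f A (_ : T) := size A * #|T|.+1 + \max_(j <- A) j.
have [s [s_ord v0 s_max]] := greedy_label_ordering_from f v.
have max_le k x : k < size s -> \max_(j <- label e s k x) j <= #|T|.
  move=> lt_ks; rewrite -(size_ordering s_ord).
  exact: leq_trans (label_max_le _ _ _) (ltnW lt_ks).
have lex k y : 0 < k < size s -> y \notin take k s ->
    size (label e s k y) <= size (label e s k (nth y s k)) /\
    (size (label e s k (nth y s k)) <= size (label e s k y) ->
     \max_(j <- label e s k y) j <= \max_(j <- label e s k (nth y s k)) j).
  move=> k_range ys; have /andP[_ lt_ks] := k_range.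
  exact: lex_pair_leq (max_le _ _ lt_ks) (max_le _ _ lt_ks) (s_max k y k_range ys).
exists s; split=> //; first split=> //.
- move=> [|k] y lt_ks ys //; rewrite /MCS_prec -leqNgt.
  by case: (lex k.+1 y lt_ks ys).
- move=> [|k] y lt_ks ys; first by rewrite /label /= !big_nil.
  exact: (lex k.+1 y lt_ks ys).2.
Qed.

Lemma GS_ordering_ending v : 1 < #|T| -> ~ cut_vertex e v ->
  exists s, GS_ordering e s /\ index v s = (size s).-1.
Proof.
move=> T_gt1 v_ncut; pose f (A : seq nat) x := (A != [::]) * 2 + (x != v).
have [s [s_ord _ s_max]] := greedy_label_ordering f (p := [::]) isT.
have s_GS : GS_ordering e s.
  split=> // k y lt_ks ys; have := s_max k y lt_ks ys; rewrite /f /GS_prec.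
  case: (label e s k (nth y s k)) => [|? ?] //=; case: (label e s k y) => [|? ?] //=.
  by case: (_ != v); case: (_ != v).
exists s; split=> //; apply/eqP; apply: contraT => v_not_last.
have lt_vs := index_ordering_lt s_ord v.
have key_v y : y \notin take (index v s) s ->
    (label e s (index v s) y != [::]) * 2 + (y != v) <=
    (label e s (index v s) v != [::]) * 2.
  by move=> ys; have := s_max _ y lt_vs ys; rewrite nth_index_ordering // /f eqxx addn0.
have lt_v1s : (index v s).+1 < size s by lia.
pose y0 := nth v s (index v s).+1.
have y0_idx : index y0 s = (index v s).+1 by rewrite index_nth_ordering.
have y0v : y0 != v by apply/eqP => eq_y0v; move: y0_idx; rewrite eq_y0v; lia.
have y0_out : y0 \notin take (index v s) s.
  by rewrite mem_take_ordering // y0_idx ltnNge leqnSn.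
have [v0 | v_gt0] := posnP (index v s).
  by have := key_v y0 y0_out; rewrite v0 y0v /=; lia.
have first0 : index (nth v s 0) s = 0.
  by rewrite index_nth_ordering // (leq_ltn_trans (leq0n _) lt_vs).
have first_v : nth v s 0 != v by apply: contraTneq v_gt0 => <-; rewrite first0.
have first_in : index (nth v s 0) s < index v s by rewrite first0.
have y0_far : ~~ (index y0 s < index v s) by rewrite y0_idx ltnNge leqnSn.
have [z [z' [lt_zv ge_z'v /and3P[zz' _ z'v]]]] :=
  connect_exit (A := fun x => index x s < index v s)
    (not_cut_connect v_ncut first_v y0v) first_in y0_far.
have z'_lab : (index z s).+1 \in label e s (index v s) z' by rewrite mem_label // lt_zv.
have z'_out : z' \notin take (index v s) s by rewrite mem_take_ordering.
have := key_v z' z'_out; rewrite z'v.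
by case: (label e s (index v s) z') z'_lab => // _ _ _ /=; case: (_ != [::]); lia.
Qed.

Lemma not_cut_DFS_L_root_leaf v s : 1 < #|T| -> ~ cut_vertex e v ->
  DFS_ordering e s -> index v s = 0 -> L_root_leaf e s v.
Proof.
move=> T_gt1 v_ncut s_DFS v0.
exact: (prefers_recent_L_root_leaf (DFS_GS s_DFS) (DFS_prefers_recent s_DFS) T_gt1 v0 v_ncut).
Qed.

Lemma not_cut_MCS_L_root_leaf v : 1 < #|T| -> ~ cut_vertex e v ->
  exists s, MCS_ordering e s /\ L_root_leaf e s v.
Proof.
move=> T_gt1 v_ncut; have [s [s_MCS s_rec v0]] := MCS_ordering_from v.
by exists s; split; last exact: (prefers_recent_L_root_leaf (MCS_GS s_MCS) s_rec T_gt1 v0).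
Qed.

Lemma not_cut_GS_branch_leaves v : 1 < #|T| -> ~ cut_vertex e v ->
  exists s, GS_ordering e s /\ L_branch_leaf e s v && F_branch_leaf e s v.
Proof.
move=> T_gt1 v_ncut; have [s [s_GS v_last]] := GS_ordering_ending T_gt1 v_ncut.
by exists s; split; last exact: (last_branch_leaves s_GS T_gt1 v_last).
Qed.

End Graph.

Theorem theorem1 (T : finType) (e : rel T) (v : T) :
  simple_graph e -> connected_graph e -> 1 < #|T| ->
  [<->
   (* (i) *)
   exists s, [/\ DFS_ordering e s, index v s = 0 & L_root_leaf e s v];
   (* (ii) *)
   forall s, DFS_ordering e s -> index v s = 0 -> L_root_leaf e s v;
   (* (iii) *)
   exists s, MCS_ordering e s /\ L_root_leaf e s v;
   (* (iv) *)
   exists s, GS_ordering e s /\ L_root_leaf e s v;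
   (* (v) *)
   exists s, GS_ordering e s /\ L_branch_leaf e s v;
   (* (vi) *)
   exists s, GS_ordering e s /\ F_branch_leaf e s v;
   (* (vii) *)
   exists s, GS_ordering e s /\ index v s = (size s).-1;
   (* (viii) *)
   ~ cut_vertex e v].
Proof.
move=> [e_sym _] e_conn T_gt1.
have root_not_cut s : GS_ordering e s -> L_root_leaf e s v -> ~ cut_vertex e v.
  by move=> s_GS; exact: (L_root_leaf_not_cut e_sym e_conn s_GS T_gt1).
have DFS_root := not_cut_DFS_L_root_leaf e_sym e_conn T_gt1.
have GS_branch := not_cut_GS_branch_leaves e_sym e_conn T_gt1.
tfae.
- by case=> s [/DFS_GS s_GS _ /(root_not_cut s s_GS)/DFS_root].
- move=> all_DFS; have [s [s_DFS v0]] := DFS_ordering_from e v.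
  apply: (not_cut_MCS_L_root_leaf e_sym e_conn T_gt1).
  exact: root_not_cut (DFS_GS s_DFS) (all_DFS s s_DFS v0).
- by case=> s [/MCS_GS s_GS leaf]; exists s.
- case=> s [s_GS /(root_not_cut s s_GS)/GS_branch[s' [s'_GS /andP[leaf _]]]].
  by exists s'.
- case=> s [s_GS /(L_branch_leaf_not_cut e_sym e_conn s_GS)/GS_branch].
  by case=> s' [s'_GS /andP[_ leaf]]; exists s'.
- case=> s [s_GS /(F_branch_leaf_not_cut e_sym e_conn s_GS)].
  exact: GS_ordering_ending.
- by case=> s [s_GS]; exact: (last_not_cut e_sym e_conn s_GS T_gt1).
- move=> v_ncut; have [s [s_DFS v0]] := DFS_ordering_from e v.
  by exists s; split; last exact: DFS_root.
Qed.
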